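(* Let $(G;+,\cdot)$ be a nonassociative right semiring and let $f, g \colon G^n \to G$ be affine functions, $f(x_1,\dots,x_n) = \sum_{i=1}^n a_ix_i + c$, $g(x_1,\dots,x_n) = \sum_{i=1}^n b_ix_i + d$. Assume that $f$ and $g$ are linear (with $c=d=0$), or that $(G;+,\cdot)$ is cancellative. Then $f \equiv g$ if and only if $\langle a_1,\dots,a_n\rangle = \langle b_1,\dots,b_n\rangle$ (as multisets) and $c = d$.
   Context: A nonassociative right semiring is an algebra $(G;+,\cdot)$ such that $(G;+)$ is a commutative monoid with neutral element $0$; $(G;\cdot)$ is a groupoid (not necessarily associative) with a right identity $1$ ($a\cdot 1 = a$); multiplication right-distributes over addition ($(a+b)c = ac + bc$); and $a \cdot 0 = 0$ for all $a$. It is cancellative if $a+b = a+c$ implies $b = c$. A function $f \colon G^n \to G$ is affine if $f(x_1,\dots,x_n) = a_1x_1+\dots+a_nx_n + c$ for some $a_i, c \in G$; linear if $c = 0$. $\langle \cdot \rangle$ denotes a multiset. Two functions $f, g \colon A^n \to B$ are equivalent, $f \equiv g$, if there is a permutation $\sigma$ of $\{1,\dots,n\}$ with $f(x_1,\dots,x_n) = g(x_{\sigma(1)},\dots,x_{\sigma(n)})$ for all $(x_1,\dots,x_n)\in A^n$. *)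

From mathcomp Require Import all_boot all_fingroup.
From Stdlib Require Import List Permutation.
Set Implicit Arguments. Unset Strict Implicit. Unset Printing Implicit Defensive.

Record NARSemiring := {
  carrier :> Type;
  sadd : carrier -> carrier -> carrier;
  smul : carrier -> carrier -> carrier;
  szero : carrier;
  sone : carrier;
  saddA : forall a b c, sadd a (sadd b c) = sadd (sadd a b) c;
  saddC : forall a b, sadd a b = sadd b a;
  sadd0 : forall a, sadd a szero = a;
  smul1 : forall a, smul a sone = a;
  smulDl : forall a b c, smul (sadd a b) c = sadd (smul a c) (smul b c);
  smul0 : forall a, smul a szero = szero
}.

Definition cancellative (G : NARSemiring) : Prop :=
  forall a b c : G, sadd a b = sadd a c -> b = c.

Definition affine_fun (G : NARSemiring) (n : nat) (a : 'I_n -> G) (c : G)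
  (x : 'I_n -> G) : G :=
  sadd (\big[@sadd G / szero G]_(i < n) smul (a i) (x i)) c.

Definition fun_equiv (A B : Type) (n : nat) (f g : ('I_n -> A) -> B) : Prop :=
  exists s : 'S_n, forall x : 'I_n -> A, f x = g (fun i => x (s i)).

Definition multiset_eq (A : Type) (n : nat) (a b : 'I_n -> A) : Prop :=
  Permutation (map a (enum 'I_n)) (map b (enum 'I_n)).

(* The argument evaluates f(x) = sum_i a_i x_i + c at two kinds of points:
   - at the zero vector every affine function takes its constant value c;
   - at the unit vector e_j it takes the value a_j + c.
   Permuting the variables maps 0 to 0 and e_j to e_(sigma^-1 j), so f == g
   first gives c = d and then a_j + c = b_(sigma^-1 j) + d, whence
   a_j = b_(sigma^-1 j) by cancelling the (equal) constants.  Conversely,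
   reindexing the sum shows that permuting the coefficients of an affine
   function is the same as permuting its variables.  Both directions are glued
   to the multiset statement by the characterisation "two finite families have
   the same multiset of values iff one is a reindexing of the other by a
   permutation", proved via the library fact tuple_permP, after translating the
   Stdlib predicate Permutation into MathComp's perm_eq. *)
From HB Require Import structures.
From mathcomp Require Import all_boot all_fingroup.
From Stdlib Require Import List Permutation.

Set Implicit Arguments.
Unset Strict Implicit.
Unset Printing Implicit Defensive.

Lemma list_map_seq_map (A B : Type) (f : A -> B) (l : list A) :
  List.map f l = seq.map f l.
Proof. by elim: l => //= x l ->. Qed.

Lemma perm_eq_Permutation (T : eqType) (s t : seq.seq T) :
  perm_eq s t -> Permutation s t.
Proof.
elim: s t => [|x s IH] t st.
  by move: st; rewrite perm_sym => /perm_nilP ->.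
have xt : x \in t by rewrite -(perm_mem st) mem_head.
case/splitPr: xt st => t1 t2 st; apply: Permutation_cons_app; apply: IH.
by rewrite -(perm_cons x) (seq.perm_trans st) // -cat1s perm_catCA.
Qed.

Lemma Permutation_perm_eq (T : eqType) (s t : seq.seq T) :
  Permutation s t -> perm_eq s t.
Proof.
elim=> //= [x l l' _ ll'|x y l|l l' l'' _ ll' _ l'l''].
- by rewrite perm_cons.
- by apply/seq.permP => p /=; rewrite addnCA.
- exact: seq.perm_trans ll' l'l''.
Qed.

Lemma multiset_eq_perm (A : Type) (n : nat) (a b : 'I_n -> A) :
  multiset_eq a b <-> exists s : 'S_n, forall i, a i = b (s i).
Proof.
rewrite /multiset_eq !list_map_seq_map; split.
- move=> /Permutation_map_inv[l []]; rewrite list_map_seq_map => al.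
  move=> /Permutation_perm_eq; rewrite perm_sym.
  rewrite -val_ord_tuple => /tuple_permP[s ls]; exists s => i.
  have /eq_in_map ab : [seq a i | i <- enum 'I_n] = [seq b (s i) | i <- enum 'I_n].
    by rewrite al ls /= -map_comp; apply: eq_map => j /=; rewrite tnth_ord_tuple.
  by apply: ab; rewrite mem_enum.
- case=> s ab; rewrite (eq_map ab) (map_comp b) -!list_map_seq_map.
  (* the indices listed in the order s 0, ..., s (n-1) are all indices once *)
  apply: Permutation_map; apply: perm_eq_Permutation.
  apply: uniq_perm; first by rewrite (map_inj_uniq (@perm_inj _ s)) enum_uniq.
    exact: enum_uniq.
  move=> i; rewrite mem_enum; apply/mapP; exists ((s^-1)%g i).
    by rewrite mem_enum.
  by rewrite permKV.
Qed.

Lemma sadd0l (G : NARSemiring) : left_id (szero G) (@sadd G).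
Proof. by move=> x; rewrite saddC sadd0. Qed.

HB.instance Definition _ (G : NARSemiring) :=
  Monoid.isComLaw.Build G (szero G) (@sadd G) (@saddA G) (@saddC G) (@sadd0l G).

Section AffineFunctions.

Variables (G : NARSemiring) (n : nat).

Definition unit_vec (j : 'I_n) (i : 'I_n) : G :=
  if i == j then sone G else szero G.

Lemma eq_affine_fun (a a' x x' : 'I_n -> G) (c : G) :
  a =1 a' -> x =1 x' -> affine_fun a c x = affine_fun a' c x'.
Proof.
by move=> aa' xx'; rewrite /affine_fun; congr sadd; apply: eq_bigr => i _; rewrite aa' xx'.
Qed.

Lemma affine_fun_zero (a : 'I_n -> G) (c : G) :
  affine_fun a c (fun _ => szero G) = c.
Proof. by rewrite /affine_fun big1 ?sadd0l // => i _; rewrite smul0. Qed.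

Lemma affine_fun_unit (a : 'I_n -> G) (c : G) (j : 'I_n) :
  affine_fun a c (unit_vec j) = sadd (a j) c.
Proof.
rewrite /affine_fun (bigD1 j) //= /unit_vec eqxx smul1 big1 ?sadd0 //.
by move=> i /negbTE ->; rewrite smul0.
Qed.

Lemma unit_vec_perm (s : 'S_n) (j : 'I_n) :
  (fun i => unit_vec j (s i)) =1 unit_vec ((s^-1)%g j).
Proof. by move=> i; rewrite /unit_vec (canF_eq (permK s)). Qed.

Lemma affine_fun_perm (b : 'I_n -> G) (c : G) (s : 'S_n) (x : 'I_n -> G) :
  affine_fun (fun i => b (s i)) c x = affine_fun b c (fun i => x ((s^-1)%g i)).
Proof.
rewrite /affine_fun (reindex_inj (@perm_inj _ (s^-1)%g)) /=.
by congr sadd; apply: eq_bigr => i _; rewrite permKV.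
Qed.

End AffineFunctions.

Arguments unit_vec {G n} j i.

Lemma cancel_constant (G : NARSemiring) (c : G) (u v : G) :
  (c = szero G \/ cancellative G) -> sadd u c = sadd v c -> u = v.
Proof.
case=> [->|canG]; first by rewrite !sadd0.
by rewrite saddC [sadd v c]saddC; apply: canG.
Qed.

Theorem mainTheorem10 (G : NARSemiring) (n : nat) (a b : 'I_n -> G) (c d : G) :
  ((c = szero G /\ d = szero G) \/ cancellative G) ->
  (fun_equiv (affine_fun a c) (affine_fun b d) <-> (multiset_eq a b /\ c = d)).
Proof.
move=> hyp; split.
- case=> s fg.
  have cd : c = d by move: (fg (fun _ => szero G)); rewrite !affine_fun_zero.
  split=> //; apply/multiset_eq_perm; exists (s^-1)%g => j.
  move: (fg (unit_vec j)).
  rewrite (eq_affine_fun _ (frefl b) (unit_vec_perm G s j)) !affine_fun_unit -cd.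
  by apply: cancel_constant; case: hyp => [[c0 _]|canG]; [left|right].
- case=> /multiset_eq_perm[t ab] <-; exists (t^-1)%g => x.
  by rewrite -affine_fun_perm; apply: eq_affine_fun.
Qed.
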